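(* For every subset $J'\subseteq J$ and every start time $t\ge 0$, there exists a partial potential schedule of $J'$ starting at $t$.
   Context: $J$ is a finite set of jobs; job $j$ has processing time $p_j>0$ and weight $w_j>0$. For $J'\subseteq J$ and $t\ge0$, a partial schedule of $J'$ starting at $t$ is an ordering of $J'$ processed consecutively without idle time from time $t$; job $j$ has (absolute) start time $t_j$. For $s\ge 0$, $\varphi_j(s)=\frac{w_j}{p_j(p_j+s)}$. For jobs $i,j$ with $w_ip_j\neq w_jp_i$, $t^*_{ij}=\frac{w_jp_i^2-w_ip_j^2}{w_ip_j-w_jp_i}$ (the unique real $s$ with $\varphi_i(s)=\varphi_j(s)$). Dominance rule: for an interval $I\subseteq[0,\infty)$, the relation ''$i$ dominates $j$ on $I$'' is violated by a (partial) schedule if $j$ is processed before $i$ and both $t_j\in I$ and $t_i-p_j\in I$. The rule contains, for each pair of distinct jobs $i,j$ with $(p_i,w_i)\ne(p_j,w_j)$: (1) if $\varphi_i(s)\ge\varphi_j(s)$ for all $s\ge 0$, ''$i$ dominates $j$ on $[0,\infty)$''; (2) otherwise, if $\varphi_j(s)\ge\varphi_i(s)$ for all $s\ge0$, ''$j$ dominates $i$ on $[0,\infty)$''; (3) otherwise, labelling the pair so that $\varphi_i(0)>\varphi_j(0)$, $t^*_{ij}>0$ is defined and the rule contains ''$i$ dominates $j$ on $[0,t^*_{ij})$'' and ''$j$ dominates $i$ on $[t^*_{ij},\infty)$''. A partial schedule of $J'$ is a partial potential schedule if it violates no relation of the rule between two jobs of $J'$. *)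

From HB Require Import structures.
From mathcomp Require Import all_boot all_order all_algebra.
Set Implicit Arguments. Unset Strict Implicit. Unset Printing Implicit Defensive.
Import Order.TTheory GRing.Theory Num.Theory.
Local Open Scope ring_scope.

Section Sched.
Variables (R : realFieldType) (J : finType) (p w : J -> R).

Definition phi (j : J) (s : R) : R := w j / (p j * (p j + s)).

Definition tstar (i j : J) : R :=
  (w j * p i ^+ 2 - w i * p j ^+ 2) / (w i * p j - w j * p i).

Definition phi_ge (i j : J) : Prop := forall s : R, 0 <= s -> phi j s <= phi i s.

(* rule_rel a b I  <->  the dominance rule contains "a dominates b on I".
   Each constructor corresponds to a case of the rule, for one of the two
   labellings of the unordered pair {a, b}. *)
Inductive rule_rel (a b : J) : (R -> Prop) -> Prop :=
| rule_case1 : a != b -> (p a, w a) != (p b, w b) -> phi_ge a b ->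
    rule_rel a b (fun s => 0 <= s)
| rule_case2 : a != b -> (p a, w a) != (p b, w b) -> ~ phi_ge b a -> phi_ge a b ->
    rule_rel a b (fun s => 0 <= s)
| rule_case3a : a != b -> (p a, w a) != (p b, w b) -> ~ phi_ge a b -> ~ phi_ge b a ->
    phi b 0 < phi a 0 -> rule_rel a b (fun s => 0 <= s /\ s < tstar a b)
| rule_case3b : a != b -> (p a, w a) != (p b, w b) -> ~ phi_ge a b -> ~ phi_ge b a ->
    phi a 0 < phi b 0 -> rule_rel a b (fun s => tstar b a <= s).

Definition partial_schedule (J' : {set J}) (s : seq J) : Prop :=
  uniq s /\ (forall j, (j \in s) = (j \in J')).

Definition start_time (s : seq J) (t : R) (j : J) : R :=
  t + \sum_(k <- take (index j s) s) p k.

Definition violates (s : seq J) (t : R) (i j : J) (I : R -> Prop) : Prop :=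
  [/\ i \in s, j \in s, (index j s < index i s)%N,
      I (start_time s t j) & I (start_time s t i - p j)].

Definition potential_schedule (J' : {set J}) (s : seq J) (t : R) : Prop :=
  partial_schedule J' s /\
  (forall (i j : J) (I : R -> Prop), rule_rel i j I -> ~ violates s t i j I).

End Sched.

From HB Require Import structures.
From mathcomp Require Import all_boot all_order all_algebra.
From mathcomp Require Import ring lra.
Set Implicit Arguments. Unset Strict Implicit. Unset Printing Implicit Defensive.
Import Order.TTheory GRing.Theory Num.Theory.
Local Open Scope ring_scope.

(* Greedy: start with a job j maximising phi_j(t), ties broken towards the
   longer job, and recurse from t + p_j.  A violated relation "i dominates j
   on I" would then need t in I.  But phi_i(s) - phi_j(s) has the sign of
   gap i j s, which is affine in s with slope w_i p_j - w_j p_i and vanishes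
   at t*_ij, so on every interval where the rule lets i dominate j, either
   phi_i > phi_j, or phi_i = phi_j and i is strictly longer than j. *)

Section GreedySchedule.
Variables (R : realFieldType) (J : finType) (p w : J -> R).
Hypothesis p_gt0 : forall j, 0 < p j.
Hypothesis w_gt0 : forall j, 0 < w j.

Local Notation phi := (phi p w).

Definition gap (i j : J) (s : R) : R :=
  w i * (p j * (p j + s)) - w j * (p i * (p i + s)).

Definition slope (i j : J) : R := w i * p j - w j * p i.

Lemma gapE i j s : gap i j s = gap i j 0 + slope i j * s.
Proof. by rewrite /gap /slope; ring. Qed.

Lemma gapN i j s : gap j i s = - gap i j s.
Proof. by rewrite /gap; ring. Qed.

Lemma gap0_slope i j :
  gap i j 0 = p j * slope i j + w j * p i * (p j - p i).
Proof. by rewrite /gap /slope; ring. Qed.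

Lemma phi_le_gap i j s : 0 <= s -> (phi j s <= phi i s) = (0 <= gap i j s).
Proof.
move=> s_ge0; have := p_gt0 i; have := p_gt0 j => pj_gt0 pi_gt0.
have di_gt0 : 0 < p i * (p i + s) by rewrite mulr_gt0 // ltr_wpDr.
have dj_gt0 : 0 < p j * (p j + s) by rewrite mulr_gt0 // ltr_wpDr.
by rewrite /phi ler_pdivrMr // mulrAC ler_pdivlMr // subr_ge0.
Qed.

Lemma phi_lt_gap i j s : 0 <= s -> (phi j s < phi i s) = (0 < gap i j s).
Proof. by move=> s_ge0; rewrite ltNge phi_le_gap // gapN oppr_ge0 -ltNge. Qed.

Lemma phi_geP i j : phi_ge p w i j <-> 0 <= gap i j 0 /\ 0 <= slope i j.
Proof.
split=> [ge_ij | [g0_ge0 b_ge0] s s_ge0]; last first.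
  by rewrite phi_le_gap // gapE addr_ge0 // mulr_ge0.
have g0_ge0 : 0 <= gap i j 0 by rewrite -phi_le_gap // ge_ij.
split=> //; rewrite leNgt; apply/negP => b_lt0.
pose s := - gap i j 0 / slope i j + 1.
have s_ge0 : 0 <= s.
  rewrite /s addr_ge0 //; apply: mulr_le0; first by rewrite oppr_le0.
  by rewrite invr_le0 ltW.
have := ge_ij s s_ge0; rewrite phi_le_gap // gapE /s mulrDr mulr1 mulrC.
by rewrite divfK ?lt_eqF // addNKr leNgt b_lt0.
Qed.

Lemma slope_lt0 i j : ~ phi_ge p w i j -> 0 <= gap i j 0 -> slope i j < 0.
Proof.
move=> not_ge g0_ge0; rewrite ltNge.
by apply: contra_notN not_ge => b_ge0; apply/phi_geP.
Qed.

Lemma lt_tstar i j s : slope i j < 0 -> (s < tstar p w i j) = (0 < gap i j s).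
Proof.
move=> b_lt0; have -> : tstar p w i j = - gap i j 0 / slope i j.
  by rewrite /tstar /gap /slope !addr0 !expr2; congr (_ / _); ring.
by rewrite ltr_ndivlMr // [gap i j s]gapE -subr_gt0 opprK addrC mulrC.
Qed.

Definition prior (t : R) (j i : J) : bool :=
  (phi i t < phi j t) || ((phi i t == phi j t) && (p i <= p j)).

Lemma prior_refl t : reflexive (prior t).
Proof. by move=> j; rewrite /prior eqxx lexx orbT. Qed.

Lemma prior_trans t : transitive (prior t).
Proof.
move=> b a c; rewrite /prior.
case/orP=> [lt_ba | /andP[/eqP-> le_ba]] /orP[lt_cb | /andP[/eqP-> le_cb]].
- by rewrite (lt_trans lt_cb lt_ba).
- by rewrite lt_ba.
- by rewrite lt_cb.
- by rewrite eqxx (le_trans le_cb le_ba) orbT.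
Qed.

Lemma prior_total t : total (prior t).
Proof.
move=> a b; rewrite /prior eq_sym; case: ltgtP => //= _.
by rewrite le_total.
Qed.

Lemma exists_prior_max t (A : {set J}) : A != set0 ->
  exists2 j, j \in A & {in A, forall i, prior t j i}.
Proof.
case/set0Pn=> k; case E: (sort (prior t) (enum A)) => [|j r].
  by rewrite -mem_enum -(mem_sort (prior t)) E.
have /(order_path_min (@prior_trans t))/allP j_min : sorted (prior t) (j :: r).
  by rewrite -E; apply/sort_sorted/prior_total.
exists j; first by rewrite -mem_enum -(mem_sort (prior t)) E mem_head.
move=> i; rewrite -mem_enum -(mem_sort (prior t)) E inE.
by case/predU1P=> [->|/j_min//]; apply: prior_refl.
Qed.

Lemma prior_gap t i j : 0 <= t -> prior t j i ->
  0 <= gap i j t -> gap i j t = 0 /\ p i <= p j.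
Proof.
move=> t_ge0 /orP[lt_ij | /andP[/eqP eq_ij le_pij]] gap_ge0.
  by move: lt_ij; rewrite phi_lt_gap // gapN oppr_gt0 ltNge gap_ge0.
split=> //; apply/eqP; rewrite eq_le gap_ge0 andbT -oppr_ge0 -gapN.
by rewrite -phi_le_gap // eq_ij.
Qed.

Lemma phi_ge_prior_eq t i j : 0 <= t -> phi_ge p w i j -> prior t j i ->
  (p i, w i) = (p j, w j).
Proof.
move=> t_ge0 ge_ij prior_ji.
have [] := prior_gap t_ge0 prior_ji; first by rewrite -phi_le_gap ?ge_ij.
have /phi_geP[g0_ge0 b_ge0] := ge_ij; rewrite gapE => gap_eq0 le_pij.
have := p_gt0 i; have := p_gt0 j => pj_gt0 pi_gt0.
have g0_eq0 : gap i j 0 = 0 by apply/eqP; rewrite eq_le g0_ge0; nra.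
have wp_gt0 : 0 < w j * p i by rewrite mulr_gt0.
have pij_eq : p i = p j.
  by apply/eqP; rewrite eq_le le_pij /=; move: g0_eq0; rewrite gap0_slope; nra.
move: g0_eq0; rewrite /gap pij_eq addr0 => /eqP.
by rewrite subr_eq0 => /eqP/mulIf-> //; rewrite mulf_neq0 ?gt_eqF.
Qed.

Lemma rule_rel_not_prior t i j (I : R -> Prop) : 0 <= t ->
  prior t j i -> rule_rel p w i j I -> ~ I t.
Proof.
move=> t_ge0 prior_ji; case=> _ /negP neq.
- by move=> ge_ij _; rewrite (phi_ge_prior_eq t_ge0 ge_ij prior_ji) eqxx in neq.
- by move=> _ ge_ij _; rewrite (phi_ge_prior_eq t_ge0 ge_ij prior_ji) eqxx in neq.
- move=> not_ge_ij _; rewrite phi_lt_gap // => g0_gt0 [_].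
  rewrite lt_tstar ?slope_lt0 ?ltW // => gap_gt0.
  by have [/eqP] := prior_gap t_ge0 prior_ji (ltW gap_gt0); rewrite gt_eqF.
- move=> _ not_ge_ji; rewrite phi_lt_gap // => g0_gt0.
  have b_lt0 := slope_lt0 not_ge_ji (ltW g0_gt0).
  rewrite leNgt lt_tstar // -leNgt -oppr_ge0 -gapN => gap_ge0.
  have [_ le_pij] := prior_gap t_ge0 prior_ji gap_ge0.
  have wp_gt0 : 0 < w i * p j by rewrite mulr_gt0.
  by move: g0_gt0; rewrite gap0_slope; have := p_gt0 i; nra.
Qed.

Lemma start_time_head (s : seq J) t j : start_time p (j :: s) t j = t.
Proof. by rewrite /start_time /= eqxx big_nil addr0. Qed.

Lemma start_time_cons (s : seq J) t j k : j != k ->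
  start_time p (j :: s) t k = start_time p s (t + p j) k.
Proof. by move=> neq_jk; rewrite /start_time /= (negPf neq_jk) big_cons addrA. Qed.

Lemma potential_schedule_cons (A : {set J}) s t j : 0 <= t ->
  j \in A -> {in A, forall i, prior t j i} ->
  potential_schedule p w (A :\ j) s (t + p j) ->
  potential_schedule p w A (j :: s) t.
Proof.
move=> t_ge0 j_in j_max [[s_uniq s_mem] s_ok]; split.
  split=> [|k]; first by rewrite /= s_uniq s_mem !inE eqxx.
  by rewrite inE s_mem in_setD1; case: eqVneq => [->|].
move=> a b I rule_ab [a_in b_in lt_ba Ib Ia].
have [eq_jb|neq_jb] := eqVneq j b.
  subst b.
  have neq_ja : j != a by apply: contraTneq lt_ba => <-; rewrite ltnn.
  move: a_in Ib; rewrite inE eq_sym (negPf neq_ja) s_mem in_setD1 start_time_head.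
  by case/andP=> _ /j_max /rule_rel_not_prior; apply.
have neq_ja : j != a by apply: contraTneq lt_ba => <-; rewrite /= eqxx.
apply: (s_ok a b I rule_ab); split.
- by move: a_in; rewrite inE eq_sym (negPf neq_ja).
- by move: b_in; rewrite inE eq_sym (negPf neq_jb).
- by move: lt_ba; rewrite /= (negPf neq_ja) (negPf neq_jb).
- by rewrite -start_time_cons.
- by rewrite -start_time_cons.
Qed.

End GreedySchedule.

Theorem lemma6 (R : realFieldType) (J : finType) (p w : J -> R)
  (hp : forall j, 0 < p j) (hw : forall j, 0 < w j)
  (J' : {set J}) (t : R) (ht : 0 <= t) :
  exists s : seq J, potential_schedule p w J' s t.
Proof.
have [n] := ubnP #|J'|; elim: n J' t ht => // n IH J' t ht card_lt.
have [->|J'_neq0] := eqVneq J' set0.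
  by exists [::]; split=> [|i j I _ []//]; split=> // j; rewrite inE.
have [j j_in j_max] := exists_prior_max p w t J'_neq0.
have t'_ge0 : 0 <= t + p j by rewrite addr_ge0 // ltW.
have card'_lt : (#|J' :\ j| < n)%N.
  by move: card_lt; rewrite (cardsD1 j) j_in add1n ltnS.
have [s s_ok] := IH (J' :\ j) (t + p j) t'_ge0 card'_lt.
exists (j :: s); exact: (potential_schedule_cons hp hw ht j_in j_max s_ok).
Qed.
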